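(* Let $N_1,\dots,N_d$ be positive integers, $\Omega=[N_1]\times\cdots\times[N_d]$, $X\subseteq\Omega$, and let $b:\mathbb{N}\to(0,\infty)$ be a function. If $\chi:X\to\{-1,0,1\}$ is a partial coloring of $X$ such that $|\chi(S)|\le b(|S|)$ for all $S\in\mathcal{C}_X$, then \[ |\chi(A)|\le 2\sum_{s:\,s=2^t}b(s) \] for all $A\in\mathcal{A}_X$, where the sum is over all powers of $2$ ($t=0,1,2,\dots$).
   Context: $[N]=\{1,\dots,N\}$. An arithmetic progression in $d$ dimensions is a set $\{\mathbf{a}+i\mathbf{b}: i=0,\dots,l-1\}$ with $\mathbf{a},\mathbf{b}\in\mathbb{Z}^d$, $\mathbf{b}\ne\mathbf{0}$, $l\in\mathbb{N}$; $\mathcal{A}_{\mathbf{N}}$ is the family of such progressions contained in $\Omega$, and $\mathcal{A}_X=\{A\cap X: A\in\mathcal{A}_{\mathbf{N}}\}$. For $\mathbf{b}\in\mathbb{Z}^d\setminus\{\mathbf{0}\}$, points $\mathbf{x},\mathbf{x}'$ are congruent mod $\mathbf{b}$ if $\mathbf{x}-\mathbf{x}'\in\mathbb{Z}\mathbf{b}$. For each $\mathbf{b}\ne\mathbf{0}$ and each congruence class $I$ of $X$ modulo $\mathbf{b}$ (i.e. the set of elements of $X$ congruent to a given point), list $I=\{\mathbf{x}_1,\dots,\mathbf{x}_l\}$ in increasing order of the dot product $\mathbf{x}_u\cdot\mathbf{b}$ (these are distinct). $\mathcal{C}_X$ is the collection, over all such $(\mathbf{b},I)$, of all sets $\{\mathbf{x}_u:(j-1)s+1\le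 u\le js\}$ where $s=2^t$ ($t\ge0$ an integer) and $1\le j\le\lfloor l/s\rfloor$. For $A\subseteq X$, $\chi(A)=\sum_{x\in A}\chi(x)$. *)

From HB Require Import structures.
From mathcomp Require Import all_boot all_order all_algebra.
From mathcomp Require Import all_classical all_reals all_analysis.
Set Implicit Arguments. Unset Strict Implicit. Unset Printing Implicit Defensive.
Import Order.TTheory GRing.Theory Num.Theory.
Local Open Scope ring_scope.

Definition pt (d : nat) := 'rV[int]_d.

Definition inOmega (d : nat) (N : 'I_d -> nat) (x : pt d) : bool :=
  [forall i, (1 <= x 0 i) && (x 0 i <= (N i)%:Z)].

Definition dot (d : nat) (x y : pt d) : int := \sum_(i < d) x 0 i * y 0 i.

Definition congr_mod (d : nat) (b x x' : pt d) : Prop :=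
  exists k : int, x - x' = k *: b.

Definition in_AP (d : nat) (a b : pt d) (l : nat) (x : pt d) : bool :=
  [exists i : 'I_l, x == a + b *+ i].

(* The congruence class of x0 in X (X given as a duplicate-free list)
   modulo b, listed in increasing order of the dot product with b. *)
Definition cong_class (d : nat) (X : seq (pt d)) (b x0 : pt d) : seq (pt d) :=
  sort (fun x y => dot x b <= dot y b)
       [seq x <- X | `[< congr_mod b x x0 >] ].

(* The block {x_u : (j-1)s+1 <= u <= js} of the listed class I (1-based j). *)
Definition block (d : nat) (I : seq (pt d)) (s j : nat) : seq (pt d) :=
  take s (drop (j.-1 * s) I).

Definition chi_sum (d : nat) (chi : pt d -> int) (S : seq (pt d)) : int :=
  \sum_(x <- S) chi x.

From HB Require Import structures.
From mathcomp Require Import all_boot all_order all_algebra.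
From mathcomp Require Import all_classical all_reals all_analysis.
From mathcomp Require Import zify.
Import Order.TTheory GRing.Theory Num.Theory.
Local Open Scope ring_scope.

(* A progression with step b that meets X lies in a single congruence class
   modulo b, and inside that class it consists of the points whose dot product
   with b falls in a window [lo, hi).  Listing the class by increasing dot
   product, the progression is thus the difference of two prefixes of the
   list, and a prefix of length q < 2^T splits, along the binary expansion of
   q, into at most one canonical block of each length 2^t with t < T. *)

Lemma filter_lt_sorted {T : eqType} {disp : Order.disp_t} {U : orderType disp}
    (f : T -> U) c (s : seq T) :
  sorted (fun x y => (f x <= f y)%O) s ->
  [seq x <- s | (f x < c)%O] = take (count (fun x => (f x < c)%O) s) s.
Proof.
elim: s => [|x s IH] //= path_s; have sorted_s := path_sorted path_s.
case: ifP => fx_lt; first by rewrite /= IH.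
have ge_fx := order_path_min (fun _ _ _ => @le_trans _ _ _ _ _) path_s.
have above_c : {in s, forall y, (f y < c)%O = false}.
  move=> y /(allP ge_fx) /= fxy; apply/negbTE; rewrite -leNgt.
  by apply: le_trans fxy; rewrite leNgt fx_lt.
rewrite (eq_in_filter (a2 := pred0)) ?filter_pred0 //.
by rewrite (eq_in_count (a2 := pred0)) ?count_pred0.
Qed.

Section DyadicPrefix.

Variables (R : numDomainType) (d : nat) (chi : pt d -> int) (bnd : nat -> R).
Variable I : seq (pt d).
Hypothesis bnd_ge0 : forall n, 0 <= bnd n.
Hypothesis block_bound : forall t j, (1 <= j <= size I %/ 2 ^ t)%N ->
  `|(chi_sum chi (block I (2 ^ t) j))%:~R| <= bnd (size (block I (2 ^ t) j)).

Lemma chi_sum_aligned_take_le T c q : (q < 2 ^ T)%N ->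
    (c * 2 ^ T + q <= size I)%N ->
  `|(chi_sum chi (take q (drop (c * 2 ^ T) I)))%:~R| <= \sum_(t < T) bnd (2 ^ t).
Proof.
elim: T c q => [|T IH] c q q_lt sizeI.
  have -> : q = 0%N by lia.
  by rewrite take0 /chi_sum big_nil normr0 big_ord0.
have pow_gt0 : (0 < 2 ^ T)%N by rewrite expn_gt0.
have double_c : (c * 2 ^ T.+1 = c.*2 * 2 ^ T)%N by rewrite expnS; lia.
rewrite big_ord_recr /= double_c.
have [q_small | q_large] := ltnP q (2 ^ T).
  apply: le_trans (IH _ _ q_small _) _; first by rewrite -double_c.
  by rewrite lerDl.
have -> : q = (2 ^ T + (q - 2 ^ T))%N by lia.
rewrite takeD drop_drop /chi_sum big_cat -!/(chi_sum chi _) intrD addrC.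
apply: le_trans (ler_normD _ _) _; apply: lerD; last first.
  have -> : (2 ^ T + c.*2 * 2 ^ T = c.*2.+1 * 2 ^ T)%N by rewrite mulSn.
  by apply: IH; rewrite expnS in q_lt; lia.
have size_block : size (take (2 ^ T) (drop (c.*2 * 2 ^ T) I)) = (2 ^ T)%N.
  by rewrite size_takel // size_drop; lia.
have := @block_bound T c.*2.+1; rewrite /block /= size_block.
by apply; rewrite leq_divRL // mulSn; lia.
Qed.

Lemma chi_sum_take_le q :
  `|(chi_sum chi (take q I))%:~R| <= \sum_(t < size I) bnd (2 ^ t).
Proof.
have -> : take q I = take (minn q (size I)) (drop (0 * 2 ^ size I) I).
  by rewrite mul0n drop0 take_min take_size.
apply: chi_sum_aligned_take_le; last by rewrite mul0n geq_minr.
exact: leq_ltn_trans (geq_minr _ _) (ltn_expl _ (isT : (1 < 2)%N)).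
Qed.

Lemma chi_sum_window_le (f : pt d -> int) lo hi :
    sorted (fun x y => f x <= f y) I -> lo <= hi ->
  `|(chi_sum chi [seq x <- I | lo <= f x < hi])%:~R|
    <= 2 * \sum_(t < size I) bnd (2 ^ t).
Proof.
move=> sortedI lo_le_hi.
have -> : chi_sum chi [seq x <- I | lo <= f x < hi] =
    chi_sum chi [seq x <- I | f x < hi] - chi_sum chi [seq x <- I | f x < lo].
  rewrite /chi_sum !big_filter [in RHS]big_mkcond [X in _ - X]big_mkcond.
  rewrite -sumrB big_mkcond; apply: eq_bigr => x _.
  have [fx_lt|] := ltP (f x) lo; first by rewrite (lt_le_trans fx_lt lo_le_hi) subrr.
  by case: ifP; rewrite subr0.
rewrite !(filter_lt_sorted _ _ _ sortedI) intrD intrN mulr_natl mulr2n.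
by apply: le_trans (ler_normD _ _) _; rewrite normrN lerD ?chi_sum_take_le.
Qed.

End DyadicPrefix.

Section ProgressionsAndClasses.

Context {d : nat}.
Implicit Types (a b x y : pt d) (l : nat).

Lemma dot_shift a b (m : int) : dot (a + m *: b) b = dot a b + m * dot b b.
Proof.
rewrite /dot mulr_sumr -big_split; apply: eq_bigr => i _.
by rewrite !mxE mulrDl mulrA.
Qed.

Lemma dot_self_gt0 b : b != 0 -> 0 < dot b b.
Proof.
move=> b_neq0.
have [i bi_neq0] : exists i, b 0 i != 0.
  apply/existsP; apply: contraNT b_neq0 => /existsPn b_eq0.
  by apply/eqP/rowP => i; rewrite !mxE; apply/eqP/negbNE.
rewrite /dot (bigD1 i) //=; apply: ltr_pwDl.
  by rewrite -expr2 lt_def sqrf_eq0 bi_neq0 sqr_ge0.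
by apply: sumr_ge0 => j _; rewrite -expr2 sqr_ge0.
Qed.

Lemma in_AP_shift a b l (m : int) : b != 0 ->
  in_AP a b l (a + m *: b) = (0 <= m < l%:Z).
Proof.
move=> b_neq0; apply/existsP/andP.
  case=> i /eqP /(addrI a) /eqP; rewrite -scaler_nat natz -subr_eq0 -scalerBl.
  rewrite scalemx_eq0 (negbTE b_neq0) orbF subr_eq0 => /eqP ->.
  by split; rewrite // ltz_nat.
case: m => [n|n] [] //= _; rewrite ltz_nat => n_lt_l.
by exists (Ordinal n_lt_l); rewrite -scaler_nat natz.
Qed.

Lemma in_AP_congr_mod {a b l x y} :
  in_AP a b l x -> in_AP a b l y -> congr_mod b x y.
Proof.
move=> /existsP [i /eqP ->] /existsP [i0 /eqP ->].
exists (i%:Z - i0%:Z); rewrite scalerBl -!natz !scaler_nat.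
by rewrite opprD addrACA subrr add0r.
Qed.

Lemma in_AP_window a b l x0 x : b != 0 ->
    in_AP a b l x0 -> congr_mod b x x0 ->
  in_AP a b l x = (dot a b <= dot x b < dot a b + l%:Z * dot b b).
Proof.
move=> b_neq0 /existsP [i0 /eqP ->] [k x_eq].
have -> : x = a + (k + i0%:Z) *: b.
  by rewrite scalerDl -natz scaler_nat addrCA -x_eq subrK.
rewrite in_AP_shift // dot_shift lerDl ltrD2l ltr_pM2r ?dot_self_gt0 //.
by rewrite pmulr_lge0 ?dot_self_gt0.
Qed.

Lemma cong_class_sorted (X : seq (pt d)) b x0 :
  sorted (fun x y => dot x b <= dot y b) (cong_class X b x0).
Proof. by apply: sort_sorted => x y; apply: le_total. Qed.

Lemma chi_sum_AP_cong_class (chi : pt d -> int) (X : seq (pt d)) {a b l x0} :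
    b != 0 -> in_AP a b l x0 ->
  chi_sum chi [seq x <- X | in_AP a b l x] =
  chi_sum chi [seq x <- cong_class X b x0 |
                dot a b <= dot x b < dot a b + l%:Z * dot b b].
Proof.
move=> b_neq0 AP_x0.
have -> : [seq x <- X | in_AP a b l x] =
    [seq x <- [seq x <- X | `[< congr_mod b x x0 >]] | in_AP a b l x].
  rewrite -filter_predI; apply: eq_filter => x /=.
  case AP_x: (in_AP a b l x) => //=.
  by rewrite (asboolT (in_AP_congr_mod AP_x AP_x0)).
have window : {in cong_class X b x0, in_AP a b l =1
    (fun x => dot a b <= dot x b < dot a b + l%:Z * dot b b)}.
  move=> x; rewrite mem_sort mem_filter => /andP [/asboolP x_x0 _].
  exact: in_AP_window b_neq0 AP_x0 x_x0.
rewrite -(eq_in_filter window) /chi_sum; apply: perm_big.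
by apply: perm_filter; rewrite /cong_class perm_sym perm_sort.
Qed.

End ProgressionsAndClasses.

Lemma partial_sum_le_nneseries (R : realType) (u : nat -> R) n :
  (forall k, 0 <= u k) -> ((\sum_(k < n) u k)%:E <= \sum_(0 <= k <oo) (u k)%:E)%E.
Proof.
move=> u_ge0; rewrite -sumEFin -(big_mkord xpredT (fun k => (u k)%:E)).
by apply: nneseries_lim_ge => k _ _; rewrite lee_fin.
Qed.

Theorem lemma2p1 (R : realType) (d : nat) (N : 'I_d -> nat)
    (X : seq (pt d)) (bnd : nat -> R) (chi : pt d -> int) :
  (forall i, (0 < N i)%N) ->
  uniq X ->
  (forall x, x \in X -> inOmega N x) ->
  (forall n, 0 < bnd n) ->
  (forall x, x \in X -> chi x \in [:: -1; 0; 1]) ->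
  (* |chi(S)| <= b(|S|) for every S in C_X *)
  (forall (b x0 : pt d) (t j : nat), b != 0 -> x0 \in X ->
     (1 <= j <= size (cong_class X b x0) %/ 2 ^ t)%N ->
     `|(chi_sum chi (block (cong_class X b x0) (2 ^ t) j))%:~R|
        <= bnd (size (block (cong_class X b x0) (2 ^ t) j))) ->
  (* conclusion for every A in A_X, A = P \cap X with P a progression in Omega *)
  forall (a b : pt d) (l : nat), b != 0 ->
    (forall i : nat, (i < l)%N -> inOmega N (a + b *+ i)) ->
    ((`|(chi_sum chi [seq x <- X | in_AP a b l x])%:~R| : R)%:E
       <= 2%:E * \sum_(0 <= t <oo) (bnd (2 ^ t)%N)%:E)%E.
Proof.
move=> _ _ _ bnd_gt0 _ block_bound a b l b_neq0 _.
have bnd_ge0 n : 0 <= bnd n by apply: ltW.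
have series_ge0 : (0 <= \sum_(0 <= t <oo) (bnd (2 ^ t)%N)%:E)%E.
  by apply: nneseries_ge0 => t _ _; rewrite lee_fin.
have [/hasP [x0 x0_X AP_x0] | ] := boolP (has (in_AP a b l) X); last first.
  rewrite has_filter negbK => /eqP ->.
  by rewrite /chi_sum big_nil normr0 mule_ge0.
rewrite (chi_sum_AP_cong_class chi X b_neq0 AP_x0).
set I := cong_class X b x0.
apply: (@le_trans _ _ (2%:E * (\sum_(t < size I) bnd (2 ^ t)%N)%:E)%E); last first.
  by apply: lee_wpmul2l => //; apply: partial_sum_le_nneseries.
rewrite -EFinM lee_fin; apply: chi_sum_window_le => //.
- by move=> t j; apply: block_bound.
- exact: cong_class_sorted.
- by rewrite lerDl mulr_ge0 // ltW // dot_self_gt0.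
Qed.
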